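(* Let $p$ be a prime. If $B\subset\mathbf{Z}/p\mathbf{Z}$ is balanced, then $|B|\geqslant\log_2 p+1$.
   Context: A subset $B$ of an abelian group is balanced if for every $b\in B$ there exist distinct $b_1,b_2\in B$ with $2b=b_1+b_2$. *)

From mathcomp Require Import all_boot all_algebra.
From Stdlib Require Import Reals.
Set Implicit Arguments. Unset Strict Implicit. Unset Printing Implicit Defensive.
Import GRing.Theory.
Local Open Scope ring_scope.

Definition balanced (G : finZmodType) (B : {set G}) : Prop :=
  forall b, b \in B -> exists b1, exists b2,
    [/\ b1 \in B, b2 \in B, b1 != b2 & b *+ 2 = b1 + b2].

Definition log2 (x : R) : R := (ln x / ln 2)%R.

From Stdlib Require Import Reals.
From mathcomp Require Import all_boot all_order all_algebra ring lra.

(* For each b in B choose two distinct f b, g b in B with 2b = f b + g b, take a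
   minimal nonempty subset C of B closed under f and g, and fix r in C; let
   S = C \ {r}.  The integer matrix M whose row b is 2e_b - e_(f b) - e_(g b) for
   b in S and e_b otherwise factors over Q as diag(2 or 1) (I - A) with A
   substochastic, so |det M| <= 2^|S|; and det M <> 0 by a maximum principle: the
   coordinates of maximal modulus of a kernel vector would form a nonempty closed
   subset of S, contradicting minimality.  Over Z/pZ the vector c |-> c - r on C
   (0 elsewhere) is a nonzero kernel vector, so p divides det M.  Hence
   p <= 2^(|C| - 1) <= 2^(|B| - 1). *)

Set Implicit Arguments.
Unset Strict Implicit.
Unset Printing Implicit Defensive.

Import Order.TTheory GRing.Theory Num.Theory.
Local Open Scope ring_scope.

Lemma det_block_schur (F : fieldType) n (c : F) (u : 'rV_n) (v : 'cV_n) (D : 'M_n) :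
  c != 0 -> \det (block_mx c%:M u v D) = c * \det (D - c^-1 *: (v *m u)).
Proof.
move=> c0.
have -> : block_mx c%:M u v D =
    block_mx 1%:M 0 (c^-1 *: v) 1%:M *m block_mx c%:M u 0 (D - c^-1 *: (v *m u)).
  rewrite mulmx_block !mul1mx !mul0mx !addr0 mul_mx_scalar scalerA mulfV // scale1r.
  by rewrite -scalemxAl addrC subrK.
by rewrite det_mulmx det_lblock det_ublock !det1 !mul1r det_scalar1.
Qed.

Lemma det1B_block (F : fieldType) n (a : F) (u : 'rV_n) (v : 'cV_n) (D : 'M_n) :
  a != 1 -> \det (1%:M - block_mx a%:M u v D) =
            (1 - a) * \det (1%:M - (D + (1 - a)^-1 *: (v *m u))).
Proof.
move=> a1; rewrite (scalar_mx_block 1 n 1) opp_block_mx add_block_mx !sub0r -raddfB.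
rewrite det_block_schur ?subr_eq0 1?eq_sym //.
by rewrite mulNmx mulmxN opprK opprD addrA.
Qed.

Definition substochastic (R : numDomainType) n (A : 'M[R]_n) :=
  (forall i j, 0 <= A i j) /\ (forall i, \sum_j A i j <= 1).

Section SubstochasticBlock.
Variables (R : realFieldType) (n : nat) (a : R) (u : 'rV[R]_n) (v : 'cV[R]_n) (D : 'M[R]_n).
Hypothesis A_sub : substochastic (block_mx a%:M u v D : 'M_(1 + n)).

Lemma substochastic_block_top :
  [/\ 0 <= a, forall j, 0 <= u 0 j & a + \sum_j u 0 j <= 1].
Proof.
have [A_ge0 A_sum] := A_sub.
have ul : a = block_mx a%:M u v D (lshift n 0) (lshift n 0) by rewrite block_mxEul mxE.
have ur j : u 0 j = block_mx a%:M u v D (lshift n 0) (rshift 1 j) by rewrite block_mxEur.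
split=> [|j|]; [by rewrite ul | by rewrite ur |].
have := A_sum (lshift n 0); rewrite big_split_ord big_ord1 /=.
by rewrite -ul; under eq_bigr do rewrite -ur.
Qed.

Lemma substochastic_block_bottom :
  [/\ forall i, 0 <= v i 0, forall i j, 0 <= D i j & forall i, v i 0 + \sum_j D i j <= 1].
Proof.
have [A_ge0 A_sum] := A_sub.
have dl i : v i 0 = block_mx a%:M u v D (rshift 1 i) (lshift n 0) by rewrite block_mxEdl.
have dr i j : D i j = block_mx a%:M u v D (rshift 1 i) (rshift 1 j) by rewrite block_mxEdr.
split=> [i|i j|i]; [by rewrite dl | by rewrite dr |].
have := A_sum (rshift 1 i); rewrite big_split_ord big_ord1 /=.
by rewrite -dl; under eq_bigr do rewrite -dr.
Qed.

Lemma substochastic_schur : a < 1 -> substochastic (D + (1 - a)^-1 *: (v *m u)).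
Proof.
move=> a_lt1; have [a_ge0 u_ge0 top] := substochastic_block_top.
have [v_ge0 D_ge0 bottom] := substochastic_block_bottom.
have a1_gt0 : 0 < 1 - a by rewrite subr_gt0.
have E i j : (D + (1 - a)^-1 *: (v *m u)) i j = D i j + (1 - a)^-1 * (v i 0 * u 0 j).
  by rewrite !mxE big_ord1.
split=> [i j|i]; first by rewrite E addr_ge0 // mulr_ge0 ?invr_ge0 ?mulr_ge0 // ltW.
under eq_bigr do rewrite E.
rewrite big_split /= -mulr_sumr -mulr_sumr.
have : (1 - a)^-1 * (v i 0 * \sum_j u 0 j) <= v i 0.
  rewrite ler_pdivrMl // mulrC; apply: ler_wpM2r => //; lra.
by have := bottom i; lra.
Qed.

Lemma det1B_block_eq0 : a = 1 -> \det (1%:M - block_mx a%:M u v D) = 0.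
Proof.
move=> a1; have [_ u_ge0 top] := substochastic_block_top.
have u0 : u = 0.
  apply/rowP => j; rewrite mxE; apply/eqP.
  have : \sum_j u 0 j == 0.
    by rewrite eq_le sumr_ge0 // andbT -(lerD2l a) addr0 {2}a1.
  by rewrite psumr_eq0 // => /allP /(_ j (mem_index_enum _)).
rewrite (scalar_mx_block 1 n 1) opp_block_mx add_block_mx u0 oppr0 addr0.
by rewrite det_lblock -raddfB a1 subrr det_scalar1 mul0r.
Qed.

End SubstochasticBlock.

Lemma det1B_substochastic (R : realFieldType) n (A : 'M[R]_n) :
  substochastic A -> 0 <= \det (1%:M - A) <= 1.
Proof.
elim: n A => [|n IH] A A_sub; first by rewrite det_mx00 ler01 lexx.
change 'M[R]_(1 + n) in A; rewrite -(submxK A) in A_sub *.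
move: A_sub; rewrite [ulsubmx _]mx11_scalar; set a := ulsubmx _ 0 0 => A_sub.
have [a_ge0 u_ge0 top] := substochastic_block_top A_sub.
have [a1 | a_neq1] := eqVneq a 1.
  by rewrite (det1B_block_eq0 A_sub a1) lexx ler01.
have a_lt1 : a < 1.
  by rewrite lt_neqAle a_neq1 (le_trans _ top) // lerDl sumr_ge0.
rewrite det1B_block //.
have /andP [det_ge0 det_le1] := IH _ (substochastic_schur A_sub a_lt1).
have a1_ge0 : 0 <= 1 - a by rewrite subr_ge0 ltW.
by rewrite mulr_ge0 // mulr_ile1 // lerBlDr lerDl.
Qed.

Definition closed2 (T : finType) (f g : T -> T) (A : {set T}) :=
  [forall x in A, (f x \in A) && (g x \in A)].

Lemma sum_delta_row (R : pzSemiRingType) n (k : 'I_n) :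
  \sum_j (delta_mx 0 k : 'rV[R]_n) 0 j = 1.
Proof.
rewrite (bigD1 k) //= mxE !eqxx big1 ?addr0 // => j /negbTE.
by rewrite mxE => ->; rewrite andbF.
Qed.

Section MidpointMatrix.
Variables (n : nat) (f g : 'I_n -> 'I_n) (S : {set 'I_n}).

Definition midpoint_mx (R : pzRingType) : 'M[R]_n :=
  \matrix_i (if i \in S then delta_mx 0 i *+ 2 - delta_mx 0 (f i) - delta_mx 0 (g i)
             else delta_mx 0 i).

Lemma mul_midpoint_mx (R : pzRingType) (y : 'cV[R]_n) i :
  (midpoint_mx R *m y) i 0 =
  if i \in S then y i 0 *+ 2 - y (f i) 0 - y (g i) 0 else y i 0.
Proof.
transitivity (row i (midpoint_mx R *m y) 0 0); first by rewrite [row _ _ _ _]mxE.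
by rewrite row_mul rowK; case: (i \in S); rewrite ?mulmxBl ?mulr2n ?mulmxDl -!rowE !mxE.
Qed.

Lemma det_midpoint_mx_intr (R : comPzRingType) :
  \det (midpoint_mx R) = (\det (midpoint_mx int))%:~R.
Proof.
rewrite -det_map_mx; congr (\det _); apply/matrixP => i j; rewrite !mxE.
by case: (i \in S); rewrite !mxE !(rmorphB, rmorphD, rmorph_nat).
Qed.

Definition average_mx (R : fieldType) : 'M[R]_n :=
  \matrix_i (if i \in S then 2^-1 *: (delta_mx 0 (f i) + delta_mx 0 (g i)) else 0).

Lemma midpoint_mx_average (R : realFieldType) :
  midpoint_mx R = diag_mx (\row_i (if i \in S then 2 else 1)) *m (1%:M - average_mx R).
Proof.
apply/matrixP => i j; rewrite mul_diag_mx !mxE.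
case: (i \in S); rewrite !mxE eqxx !andTb [j == i]eq_sym; last by rewrite mul1r subr0.
by rewrite mulrBr mulrA divff ?mul1r ?pnatr_eq0 //; lra.
Qed.

Lemma average_mx_substochastic (R : realFieldType) : substochastic (average_mx R).
Proof.
split=> [i j|i].
  rewrite !mxE; case: (i \in S); rewrite ?mxE //.
  by rewrite mulr_ge0 ?invr_ge0 ?addr_ge0 ?ler0n.
under eq_bigr do rewrite mxE; case: (i \in S); last first.
  by rewrite big1 ?ler01 // => j _; rewrite mxE.
under eq_bigr do rewrite 2!mxE.
by rewrite -mulr_sumr big_split /= !sum_delta_row mulVf ?pnatr_eq0.
Qed.

Lemma det_midpoint_mx_bounds (R : realFieldType) :
  0 <= \det (midpoint_mx R) <= 2 ^+ #|S|.
Proof.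
rewrite midpoint_mx_average det_mulmx det_diag.
have -> : \prod_i (\row_i (if i \in S then 2 else 1) : 'rV[R]_n) 0 i = 2 ^+ #|S|.
  by under eq_bigr do rewrite mxE; rewrite -big_mkcond prodr_const.
have /andP [det_ge0 det_le1] := det1B_substochastic (average_mx_substochastic R).
by rewrite mulr_ge0 ?exprn_ge0 // ler_piMr ?exprn_ge0.
Qed.

Hypothesis S_free : forall T : {set 'I_n}, T \subset S -> closed2 f g T -> T = set0.

Lemma midpoint_mx_kernel0 (R : realFieldType) (y : 'cV[R]_n) :
  midpoint_mx R *m y = 0 -> y = 0.
Proof.
move=> My.
have y_mid i : i \in S -> y i 0 *+ 2 = y (f i) 0 + y (g i) 0.
  move=> iS; apply/eqP; rewrite -subr_eq0 opprD addrA.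
  by have := mul_midpoint_mx y i; rewrite My iS mxE => <-.
have y_out i : i \notin S -> y i 0 = 0.
  by move=> /negbTE iS; have := mul_midpoint_mx y i; rewrite My iS mxE.
apply/matrixP => j k; rewrite (ord1 k) mxE; apply/eqP/contraT => yj_neq0.
(* Maximum principle: the coordinates of maximal modulus form a closed subset of S. *)
have [i0 _ i0_max] := @arg_maxP _ _ _ j xpredT (fun i => `|y i 0|) isT.
set m := `|y i0 0| in i0_max.
have m_gt0 : 0 < m by apply: lt_le_trans (i0_max j isT); rewrite normr_gt0.
pose T := [set i | `|y i 0| == m].
have TS : T \subset S.
  apply/subsetP => i; rewrite inE; apply: contraLR => /y_out ->.
  by rewrite normr0 eq_sym lt0r_neq0.
have T_closed : closed2 f g T.
  apply/forall_inP => i iT; have /eqP yi : `|y i 0| == m by rewrite inE in iT.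
  have /(congr1 Num.norm) := y_mid i (subsetP TS i iT); rewrite normrMn yi mulr2n => y2.
  have := ler_normD (y (f i) 0) (y (g i) 0); rewrite -y2 => le_sum.
  have le_f : `|y (f i) 0| <= m := i0_max (f i) isT.
  have le_g : `|y (g i) 0| <= m := i0_max (g i) isT.
  by rewrite !inE !eq_le le_f le_g /=; apply/andP; split; lra.
have : i0 \in T by rewrite inE.
by rewrite (S_free TS T_closed) inE.
Qed.

Lemma det_midpoint_mx_neq0 (R : realFieldType) : \det (midpoint_mx R) != 0.
Proof.
rewrite -det_tr; apply/det0P => -[v v_neq0 vM].
have /(congr1 trmx) : v^T = 0.
  by apply: midpoint_mx_kernel0; rewrite -[RHS](trmx0 _ _) -vM trmx_mul trmxK.
by rewrite trmxK trmx0; apply/eqP.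
Qed.

Lemma det_midpoint_mx_nat :
  exists2 m : nat, (0 < m <= 2 ^ #|S|)%N &
    forall R : comPzRingType, \det (midpoint_mx R) = m%:R.
Proof.
set D := \det (midpoint_mx int).
have /andP [D_ge0 D_le] : 0 <= D <= (2 ^ #|S|)%N.
  have two_pow : ((2 ^ #|S|)%N%:~R : rat) = 2 ^+ #|S| by rewrite -natrX.
  by rewrite -(ler0z rat) -(ler_int rat) two_pow -det_midpoint_mx_intr det_midpoint_mx_bounds.
have := det_midpoint_mx_neq0 rat; rewrite det_midpoint_mx_intr intr_eq0 => D_neq0.
exists `|D|%N => [|R]; last by rewrite det_midpoint_mx_intr -[RHS]/(`|D|%N%:~R) gez0_abs.
by rewrite -ltz_nat -lez_nat gez0_abs // lt0r D_neq0 D_ge0.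
Qed.

End MidpointMatrix.

Lemma mulmx_eq0_scale_det (R : comPzRingType) n (M : 'M[R]_n) (y : 'cV_n) :
  M *m y = 0 -> \det M *: y = 0.
Proof. by move=> My; rewrite -mul_scalar_mx -mul_adj_mx -mulmxA My mulmx0. Qed.

Lemma Zp_natr_eq0 p m : prime p -> ((m%:R : 'Z_p) == 0) = (p %| m)%N.
Proof. by move=> p_pr; rewrite -val_eqE /= val_Zp_nat ?prime_gt1. Qed.

Lemma Zp_prime_unit p (t : 'Z_p) : prime p -> t != 0 -> t \is a GRing.unit.
Proof.
move=> p_pr t_neq0; rewrite -[t]natr_Zp unitZpE ?prime_gt1 // prime_coprime //.
rewrite gtnNdvd //; first by rewrite -val_eqE in t_neq0; rewrite lt0n.
by rewrite -[X in (_ < X)%N](Zp_cast (prime_gt1 p_pr)).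
Qed.

Lemma dvdn_det_Zp p n (M : 'M['Z_p]_n) (y : 'cV_n) m :
  prime p -> M *m y = 0 -> y != 0 -> \det M = m%:R -> (p %| m)%N.
Proof.
move=> p_pr /mulmx_eq0_scale_det detMy y_neq0 detM.
have [i yi_neq0] : exists i, y i 0 != 0.
  apply/existsP; apply: contraNT y_neq0 => /existsPn y0.
  by apply/eqP/matrixP => i j; rewrite (ord1 j) mxE; apply/eqP/negbNE/y0.
have := congr1 (fun A : 'cV_n => A i 0) detMy; rewrite !mxE detM => my.
by rewrite -Zp_natr_eq0 // -(mulrK (Zp_prime_unit p_pr yi_neq0) m%:R) my mul0r.
Qed.

Lemma balanced_choice (G : finZmodType) (B : {set G}) : balanced B ->
  exists f g : G -> G, forall b, b \in B ->
    [/\ f b \in B, g b \in B, f b != g b & b *+ 2 = f b + g b].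
Proof.
move=> B_bal.
have /fin_all_exists [fg fgP] : forall b, exists c : G * G, b \in B ->
    [/\ c.1 \in B, c.2 \in B, c.1 != c.2 & b *+ 2 = c.1 + c.2].
  move=> b; have [/B_bal [b1 [b2 ?]] | _] := boolP (b \in B); first by exists (b1, b2).
  by exists (b, b).
by exists (fun b => (fg b).1), (fun b => (fg b).2).
Qed.

Lemma closed2_minimal (T : finType) (f g : T -> T) (B : {set T}) :
  B != set0 -> closed2 f g B ->
  exists (C : {set T}) r, [/\ r \in C, C \subset B, closed2 f g C &
    forall X : {set T}, X \subset C :\ r -> closed2 f g X -> X = set0].
Proof.
move=> B_neq0 B_closed.
pose P := [pred X : {set T} | [&& X \subset B, X != set0 & closed2 f g X]].
have PB : P B by rewrite inE subxx B_neq0.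
have [C /minsetP [/and3P [CB C_neq0 C_closed] C_min] _] := minset_exists PB.
have [r rC] := set0Pn _ C_neq0.
exists C, r; split => // X XS X_closed; apply/eqP/contraT => X_neq0.
have XC : X \subset C := subset_trans XS (subD1set C r).
have /C_min /(_ XC) XC_eq : P X by rewrite inE (subset_trans XC CB) X_neq0.
by move: XS; rewrite XC_eq => /subsetP /(_ r rC); rewrite !inE eqxx.
Qed.

Lemma balanced_Zp_card p (B : {set 'Z_p}) :
  prime p -> B != set0 -> balanced B -> (p <= 2 ^ #|B|.-1)%N.
Proof.
move=> p_pr B_neq0 /balanced_choice [f [g fgB]].
have B_closed : closed2 f g B by apply/forall_inP => b /fgB [-> ->].
have [C [r [rC CB C_closed S_free]]] := closed2_minimal B_neq0 B_closed.
have fgC b : b \in C -> f b \in C /\ g b \in C by move/(forall_inP C_closed)/andP.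
have [s sC s_neq_r] : exists2 s, s \in C & s != r.
  have [_ _ fg_neq _] := fgB r (subsetP CB r rC); have [frC grC] := fgC r rC.
  have [fr_eq | ] := eqVneq (f r) r; last by exists (f r).
  by exists (g r); rewrite // -{2}fr_eq eq_sym.
pose y : 'cV['Z_p]_(Zp_trunc p).+2 := \col_c (if c \in C then c - r else 0).
have My : midpoint_mx f g (C :\ r) _ *m y = 0.
  apply/matrixP => b k; rewrite (ord1 k) mul_midpoint_mx !mxE !inE.
  have [-> | b_neq_r] /= := eqVneq b r; first by rewrite rC subrr.
  case bC : (b \in C) => //; have [-> ->] := fgC b bC.
  by have [_ _ _ b2] := fgB b (subsetP CB b bC); rewrite mulrnBl b2; ring.
have y_neq0 : y != 0.
  by apply/eqP => /matrixP /(_ s 0) /eqP; rewrite !mxE sC subr_eq0 (negbTE s_neq_r).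
have [m /andP [m_gt0 m_le] detM] := det_midpoint_mx_nat S_free.
have p_le_m := dvdn_leq m_gt0 (dvdn_det_Zp p_pr My y_neq0 (detM _)).
apply: (leq_trans p_le_m (leq_trans m_le _)); rewrite leq_pexp2l //.
have := subset_leq_card CB; rewrite (cardsD1 r C) rC /=.
by case: #|B| => // k; rewrite add1n ltnS.
Qed.

Local Close Scope ring_scope.
(* ring_scope also uses the key R: give it back to the reals of the statement. *)
Delimit Scope R_scope with R.

Lemma INR_expn (m k : nat) : INR (m ^ k) = (INR m ^ k)%R.
Proof. by elim: k => [|k IH]; rewrite ?expn0 // expnS -multE mult_INR IH. Qed.

Lemma ln_le (x y : R) : (0 < x)%R -> (x <= y)%R -> (ln x <= ln y)%R.
Proof.
move=> x_gt0 x_le_y; apply: Rnot_lt_le => ln_lt.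
have y_gt0 := Rlt_le_trans _ _ _ x_gt0 x_le_y.
exact: Rle_not_lt x_le_y (ln_lt_inv _ _ y_gt0 x_gt0 ln_lt).
Qed.

Lemma log2_INR_le (m k : nat) : (0 < m)%N -> (m <= 2 ^ k)%N -> (log2 (INR m) <= INR k)%R.
Proof.
move=> /ssrnat.ltP m_gt0 /ssrnat.leP m_le.
have ln2_gt0 : (0 < ln 2)%R := Rlt_trans _ _ _ (Rinv_0_lt_compat 2 Rlt_0_2) ln_lt_2.
apply: (Rmult_le_reg_r (ln 2)) => //.
rewrite /log2 /Rdiv Rmult_assoc Rinv_l ?Rmult_1_r; last exact: Rgt_not_eq.
rewrite -ln_pow; last exact: Rlt_0_2.
apply: ln_le; first exact: lt_0_INR.
by have := le_INR _ _ m_le; rewrite INR_expn.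
Qed.

Theorem corollary4p4 (p : nat) (B : {set 'Z_p}) :
  prime p -> B != set0 -> balanced B ->
  (log2 (INR p) + 1 <= INR #|B|)%R.
Proof.
move=> p_pr B_neq0 B_bal.
have B_gt0 : (0 < #|B|)%N by rewrite card_gt0.
rewrite -(prednK B_gt0) S_INR; apply: Rplus_le_compat_r.
exact: log2_INR_le (prime_gt0 p_pr) (balanced_Zp_card p_pr B_neq0 B_bal).
Qed.
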